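(* Let $b \in \mathbb{Z}_{>0}$, let $\ell \ge 0$ be an integer, and let $X_b = \{0,1\}^\ell \times \{0,1,\dots,b\} \subseteq \mathbb{Z}^{\ell+1}$. Then the polyhedron $P = \{x \in \mathbb{R}^{\ell+1} : x_k \le 1 + \sum_{i=k+1}^{\ell+1}(b+1)^{-i}x_i \text{ for } k\in\{1,\dots,\ell\},\ x_{\ell+1}\le b,\ x_1 + \sum_{i=2}^{\ell+1}(b+1)^{-i}x_i \ge 0\}$ satisfies $P \cap \mathbb{Z}^{\ell+1} = X_b$. In particular, $\mathrm{rc}(X_b) \le \ell+2$.
   Context: $\mathrm{rc}(X)$ is the smallest number of facets of a polyhedron $P\subseteq\mathbb{R}^n$ with $P \cap \mathbb{Z}^n = X$. *)

From HB Require Import structures.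
From mathcomp Require Import all_boot all_order all_algebra.
From mathcomp Require Import classical_sets reals.
Set Implicit Arguments. Unset Strict Implicit. Unset Printing Implicit Defensive.
Import Order.TTheory GRing.Theory Num.Theory.
Local Open Scope ring_scope.
Local Open Scope classical_set_scope.

Section PolyDefs.
Variables (R : realType) (n : nat).

Definition dotv (a x : 'rV[R]_n) : R := \sum_(i < n) a ord0 i * x ord0 i.

Definition polyhedron (P : set 'rV[R]_n) : Prop :=
  exists (m : nat) (A : 'I_m -> 'rV[R]_n) (c : 'I_m -> R),
    P = [set x | forall j, dotv (A j) x <= c j].

Definition Zpts : set 'rV[R]_n := [set x | forall i, x ord0 i \is a Num.int].

Definition face (P F : set 'rV[R]_n) : Prop :=
  exists (a : 'rV[R]_n) (d : R),
    (forall x, P x -> dotv a x <= d) /\ F = P `&` [set x | dotv a x = d].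

Definition affdim_ge (S : set 'rV[R]_n) (d : nat) : Prop :=
  exists p : 'I_d.+1 -> 'rV[R]_n,
    (forall i, S (p i)) /\ row_free (\matrix_(i < d) (p (lift ord0 i) - p ord0)).

Definition affdim (S : set 'rV[R]_n) (d : nat) : Prop :=
  affdim_ge S d /\ ~ affdim_ge S d.+1.

Definition facet (P F : set 'rV[R]_n) : Prop :=
  face P F /\ exists d : nat, affdim P d.+1 /\ affdim F d.

Definition at_most_facets (P : set 'rV[R]_n) (k : nat) : Prop :=
  exists f : 'I_k -> set 'rV[R]_n, forall F, facet P F -> exists i, F = f i.

Definition rc_le (X : set 'rV[R]_n) (k : nat) : Prop :=
  exists P : set 'rV[R]_n, polyhedron P /\ P `&` Zpts = X /\ at_most_facets P k.

End PolyDefs.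

(* X_b = {0,1}^l x {0,...,b}, coordinates indexed 0..l (paper: 1..l+1) *)
Definition Xb (R : realType) (l b : nat) : set 'rV[R]_l.+1 :=
  [set x | (forall i : 'I_l.+1, (i < l)%N -> x ord0 i = 0 \/ x ord0 i = 1) /\
           exists k : nat, (k <= b)%N /\ x ord0 ord_max = k%:R].

(* The polyhedron P of the lemma; paper index i+1 corresponds to our i *)
Definition Pb (R : realType) (l b : nat) : set 'rV[R]_l.+1 :=
  [set x |
    (forall k : 'I_l.+1, (k < l)%N ->
       x ord0 k <= 1 + \sum_(i < l.+1 | (k < i)%N) (b.+1)%:R ^- (i.+1) * x ord0 i) /\
    x ord0 ord_max <= b%:R /\
    0 <= x ord0 ord0 + \sum_(i < l.+1 | (0 < i)%N) (b.+1)%:R ^- (i.+1) * x ord0 i].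

From HB Require Import structures.
From mathcomp Require Import all_boot all_order all_algebra.
From mathcomp Require Import classical_sets reals.
From mathcomp Require Import zify lra.
Set Implicit Arguments. Unset Strict Implicit. Unset Printing Implicit Defensive.
Import Order.TTheory GRing.Theory Num.Theory.
Local Open Scope ring_scope.
Local Open Scope classical_set_scope.

(* Write U_k = sum_(i > k) (b+1)^-(i+1) x_i. At an integer point of P, a
   downward induction shows U_k < (b+1)^-(k+1) < 1, so the k-th inequality
   forces x_k <= 1; reading the last inequality and then the identities
   U_(k-1) = (b+1)^-(k+1) x_k + U_k upwards shows x_k > -1 and U_k >= 0 at every
   step.
   P is full-dimensional (it contains 0 and the unit vectors), and each facet of
   a full-dimensional polyhedron {x | A_j x <= c_j} is cut out by one of its
   nonzero rows: the barycenter of affinely independent points of the facet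
   makes some inequality tight, that inequality is then tight on all of them,
   so A_j is orthogonal to the facet and proportional to its defining normal. *)

Section DotProduct.
Variables (R : realType) (n : nat).
Implicit Types (a u x y : 'rV[R]_n).

Lemma dotvC a x : dotv a x = dotv x a.
Proof. by apply: eq_bigr => i _; rewrite mulrC. Qed.

Lemma dotvDr a x y : dotv a (x + y) = dotv a x + dotv a y.
Proof. by rewrite /dotv -big_split; apply: eq_bigr => i _; rewrite mxE mulrDr. Qed.

Lemma dotvNr a x : dotv a (- x) = - dotv a x.
Proof. by rewrite /dotv -sumrN; apply: eq_bigr => i _; rewrite mxE mulrN. Qed.

Lemma dotvBr a x y : dotv a (x - y) = dotv a x - dotv a y.
Proof. by rewrite dotvDr dotvNr. Qed.

Lemma dotvZr a x k : dotv a (k *: x) = k * dotv a x.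
Proof. by rewrite /dotv mulr_sumr; apply: eq_bigr => i _; rewrite mxE mulrCA. Qed.

Lemma dotvDl a u x : dotv (a + u) x = dotv a x + dotv u x.
Proof. by rewrite ![dotv _ x]dotvC dotvDr. Qed.

Lemma dotvNl a x : dotv (- a) x = - dotv a x.
Proof. by rewrite ![dotv _ x]dotvC dotvNr. Qed.

Lemma dotvZl a x k : dotv (k *: a) x = k * dotv a x.
Proof. by rewrite ![dotv _ x]dotvC dotvZr. Qed.

Lemma dotv0l x : dotv 0 x = 0.
Proof. by rewrite -(scale0r 0) dotvZl mul0r. Qed.

Lemma dotv_sumr N a (p : 'I_N -> 'rV[R]_n) :
  dotv a (\sum_(i < N) p i) = \sum_(i < N) dotv a (p i).
Proof.
rewrite /dotv exchange_big; apply: eq_bigr => t _.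
by rewrite summxE mulr_sumr.
Qed.

Lemma dotv_delta (k : 'I_n) x : dotv (delta_mx 0 k) x = x ord0 k.
Proof.
rewrite /dotv (bigD1 k) //= big1 => [|i /negbTE ik]; last by rewrite mxE ik andbF mul0r.
by rewrite mxE !eqxx mul1r addr0.
Qed.

Lemma dotv_self_gt0 a : a != 0 -> 0 < dotv a a.
Proof.
have sq_ge0 i : 0 <= a ord0 i * a ord0 i by rewrite -expr2 sqr_ge0.
move=> a_neq0; rewrite lt_def (sumr_ge0 _ (fun i _ => sq_ge0 i)) andbT.
apply: contraNneq a_neq0 => /eqP; rewrite psumr_eq0 => [/allP a0|i _ //].
apply/eqP/rowP => i; rewrite mxE; apply/eqP.
by have := a0 i (mem_index_enum _); rewrite mulf_eq0 orbb.
Qed.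

Lemma mulmx_tr_dotv e a (M : 'M[R]_(e, n)) k : (a *m M^T) 0 k = dotv a (row k M).
Proof. by rewrite mxE; apply: eq_bigr => t _; rewrite !mxE. Qed.

End DotProduct.

Lemma row_free_rowsub (F : fieldType) m k p (f : 'I_k -> 'I_m) (A : 'M[F]_(m, p)) :
  injective f -> row_free A -> row_free (rowsub f A).
Proof.
move=> f_inj freeA; apply: inj_row_free => v.
rewrite rowsubE mulmxA -(mul0mx _ A) => /(row_free_inj freeA) vf0.
apply/rowP => i; have := congr1 (fun w : 'rV[F]_m => w 0 (f i)) vf0.
rewrite !mxE (bigD1 i) //= big1 => [|j /negbTE ji]; last by rewrite !mxE (inj_eq f_inj) ji mulr0.
by rewrite !mxE eqxx mulr1 addr0.
Qed.

Lemma row_free_orthogonal_colinear (F : fieldType) e n (M : 'M[F]_(e, n))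
    (u v : 'rV[F]_n) :
  n = e.+1 -> row_free M -> u != 0 -> u *m M^T = 0 -> v *m M^T = 0 ->
  exists k, v = k *: u.
Proof.
move=> n_eq freeM u_neq0 uM vM.
have rank_ker : \rank (kermx M^T) = 1%N.
  by rewrite mxrank_ker mxrank_tr (eqP freeM) n_eq subSnn.
have uK : (u <= kermx M^T)%MS by apply/sub_kermxP.
have vK : (v <= kermx M^T)%MS by apply/sub_kermxP.
have /andP[_ Ku] : (u == kermx M^T)%MS.
  by rewrite -(mxrank_leqif_eq uK).2 rank_ker rank_rV u_neq0.
have /submxP[D ->] := submx_trans vK Ku.
by exists (D 0 0); rewrite {1}(mx11_scalar D) mul_scalar_mx.
Qed.

Section AffineDimension.
Variables (R : realType) (n : nat).
Implicit Type S : set 'rV[R]_n.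

Lemma affdim_ge_dim S k : affdim_ge S k -> (k <= n)%N.
Proof. by case=> p [_ /eqP <-]; exact: rank_leq_col. Qed.

Lemma affdim_geW S k m : (k <= m)%N -> affdim_ge S m -> affdim_ge S k.
Proof.
move=> km [p [Sp freep]]; pose q := p \o widen_ord (km : k.+1 <= m.+1)%N.
exists q; split=> [i|]; first exact: Sp.
set M := \matrix_(i < m) _ in freep.
rewrite (_ : \matrix_(i < k) _ = rowsub (widen_ord km) M).
  by apply: row_free_rowsub freep => i j /(congr1 val) ij; exact: val_inj.
by apply/matrixP => i j; rewrite !mxE /=; congr (p _ _ _ - p _ _ _); exact: val_inj.
Qed.

Lemma affdim_ge_simplex S : S 0 -> (forall i, S (delta_mx 0 i)) -> affdim_ge S n.
Proof.
move=> S0 Sdelta.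
pose p (i : 'I_n.+1) : 'rV[R]_n := if unlift ord0 i is Some j then delta_mx 0 j else 0.
exists p; split=> [i|]; first by rewrite /p; case: unlift.
rewrite (_ : \matrix_(i < n) _ = 1%:M); first by rewrite /row_free mxrank1.
by apply/matrixP => i j; rewrite mxE /p liftK unlift_none subr0 !mxE eqxx eq_sym.
Qed.

End AffineDimension.

Section Barycenter.
Variables (R : realType) (n N : nat) (p : 'I_N.+1 -> 'rV[R]_n).

Definition mean : 'rV[R]_n := N.+1%:R^-1 *: \sum_i p i.

Lemma subr_dotv_mean u r :
  r - dotv u mean = N.+1%:R^-1 * \sum_i (r - dotv u (p i)).
Proof.
rewrite dotvZr dotv_sumr sumrB sumr_const card_ord mulrBr -[r *+ _]mulr_natr.
by rewrite mulrCA mulVf ?mulr1 // pnatr_eq0.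
Qed.

Lemma dotv_mean_le u r : (forall i, dotv u (p i) <= r) -> dotv u mean <= r.
Proof.
move=> pu; rewrite -subr_ge0 subr_dotv_mean mulr_ge0 ?invr_ge0 ?ler0n //.
by apply: sumr_ge0 => i _; rewrite subr_ge0.
Qed.

Lemma dotv_mean_const u r : (forall i, dotv u (p i) = r) -> dotv u mean = r.
Proof.
move=> pu; apply/eqP; rewrite eq_sym -subr_eq0 subr_dotv_mean big1 ?mulr0 // => i _.
by rewrite pu subrr.
Qed.

Lemma dotv_mean_eq u r :
  (forall i, dotv u (p i) <= r) -> dotv u mean = r -> forall i, dotv u (p i) = r.
Proof.
move=> pu /eqP; rewrite eq_sym -subr_eq0 subr_dotv_mean mulf_eq0 invr_eq0 pnatr_eq0 /=.
rewrite psumr_eq0 => [/allP sum0 i|i _]; last by rewrite subr_ge0.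
by apply/eqP; rewrite eq_sym -subr_eq0; exact: sum0 (mem_index_enum _).
Qed.

End Barycenter.

Section Facets.
Variables (R : realType) (n m : nat) (A : 'I_m -> 'rV[R]_n) (c : 'I_m -> R).
Let P := [set x | forall j, dotv (A j) x <= c j].

Lemma strictly_feasible_move (y a : 'rV[R]_n) :
  (forall j, dotv (A j) y < c j) -> exists2 eps, 0 < eps & P (y + eps *: a).
Proof.
move=> y_strict.
pose s j := c j - dotv (A j) y.
pose S := \sum_j `|dotv (A j) a| / s j.
have s_gt0 j : 0 < s j by rewrite subr_gt0.
have S_ge0 : 0 <= S.
  by apply: sumr_ge0 => j _; exact: divr_ge0 (normr_ge0 _) (ltW (s_gt0 j)).
have S1_gt0 : 0 < 1 + S by lra.
(* A step of length 1 / (1 + S) uses up less than the slack s j of every row. *)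
exists (1 + S)^-1; first by rewrite invr_gt0.
move=> j; rewrite dotvDr dotvZr.
have : `|dotv (A j) a| / s j <= S.
  rewrite /S (bigD1 j) //= lerDl; apply: sumr_ge0 => i _.
  exact: divr_ge0 (normr_ge0 _) (ltW (s_gt0 i)).
rewrite ler_pdivrMr // => aS.
have : (1 + S)^-1 * dotv (A j) a <= (1 + S)^-1 * `|dotv (A j) a|.
  by apply: ler_wpM2l; [rewrite invr_ge0 ltW | exact: ler_norm].
have : (1 + S)^-1 * `|dotv (A j) a| <= s j.
  by rewrite mulrC ler_pdivrMr //; have := s_gt0 j; nra.
rewrite /s; lra.
Qed.

Lemma exists_tight_constraint (a y : 'rV[R]_n) d :
  a != 0 -> (forall x, P x -> dotv a x <= d) -> P y -> dotv a y = d ->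
  exists j, dotv (A j) y = c j.
Proof.
move=> a_neq0 valid Py ay.
case: (pickP (fun j => dotv (A j) y == c j)) => [j /eqP|none]; first by exists j.
have [|eps eps_gt0 Pz] := @strictly_feasible_move y a.
  by move=> j; rewrite lt_neqAle none Py.
have := valid _ Pz; rewrite dotvDr dotvZr ay.
have := dotv_self_gt0 a_neq0; nra.
Qed.

Lemma facet_tight F :
  (forall j, A j != 0) -> affdim_ge P n -> facet P F ->
  exists j, F = P `&` [set x | dotv (A j) x = c j].
Proof.
move=> A_neq0 Pfull [[a [d [valid ->]]] [e [[Pge Pnot] [[p [Fp freep]] Fnot]]]].
have n_eq : n = e.+1.
  apply/eqP; rewrite eqn_leq (affdim_ge_dim Pge) andbT leqNgt.
  by apply/negP => lt_e_n; exact: Pnot (affdim_geW lt_e_n Pfull).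
have Pp i : P (p i) := (Fp i).1.
have ap i : dotv a (p i) = d := (Fp i).2.
have a_neq0 : a != 0.
  apply: contra_notN Fnot => /eqP a0; have d0 : d = 0 by rewrite -(ap ord0) a0 dotv0l.
  by case: Pge => q [Pq freeq]; exists q; split=> // i; split=> //=; rewrite a0 d0 dotv0l.
have Py : P (mean p) by move=> j; apply: dotv_mean_le => i; exact: Pp.
have [j Ajy] := exists_tight_constraint a_neq0 valid Py (dotv_mean_const ap).
have Ajp := dotv_mean_eq (fun i => Pp i j) Ajy.
have [k Ajk] : exists k, A j = k *: a.
  by apply: (row_free_orthogonal_colinear n_eq freep a_neq0);
    apply/rowP => i; rewrite mulmx_tr_dotv rowK dotvBr ?ap ?Ajp subrr mxE.
have k_neq0 : k != 0 by apply: contraNneq (A_neq0 j) => k0; rewrite Ajk k0 scale0r.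
have cj : c j = k * d by rewrite -(Ajp ord0) Ajk dotvZl ap.
exists j; apply/seteqP; split=> x [Px /= ax]; split=> //=; move: ax.
  by rewrite Ajk dotvZl cj => ->.
by rewrite Ajk dotvZl cj; exact: mulfI.
Qed.

Lemma polyhedron_at_most_facets :
  (forall j, A j != 0) -> affdim_ge P n -> at_most_facets P m.
Proof.
move=> A_neq0 Pfull.
by exists (fun j => P `&` [set x | dotv (A j) x = c j]) => F /(facet_tight A_neq0 Pfull).
Qed.

End Facets.

Section IntegerReals.
Variable R : archiRealDomainType.
Implicit Types x y : R.

Lemma intr_ltD1 x y : x \is a Num.int -> y \is a Num.int -> (x < y + 1) = (x <= y).
Proof.
move=> /intrP[m ->] /intrP[k ->].
by rewrite (_ : 1 = 1%:~R) // -intrD ltr_int ler_int; lia.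
Qed.

Lemma intr01 x : x \is a Num.int -> 0 <= x -> x <= 1 -> x = 0 \/ x = 1.
Proof.
move=> /intrP[k ->]; rewrite (_ : 0 = 0%:~R) // (_ : 1 = 1%:~R) // !ler_int => k0 k1.
have [->|->] : k = 0 \/ k = 1 by lia.
  by left.
by right.
Qed.

Lemma intr_ge0_of_affine (c u y : R) :
  y \is a Num.int -> 0 < c -> u < c -> 0 <= c * y + u -> 0 <= y.
Proof.
move=> y_int c_gt0 uc cyu; rewrite -(intr_ltD1 (int_num0 R) y_int) ltNge.
by apply/negP => y1; have := ler_wpM2l (ltW c_gt0) y1; nra.
Qed.

End IntegerReals.

Section TailSums.
Variables (R : realType) (l b : nat).
Implicit Type x : 'rV[R]_l.+1.

Definition weight (i : nat) : R := (b.+1)%:R ^- i.+1.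

Definition tail_sum x (k : nat) : R :=
  \sum_(i < l.+1 | (k < i)%N) weight i * x ord0 i.

Lemma weight_gt0 i : 0 < weight i.
Proof. by rewrite invr_gt0 exprn_gt0. Qed.

Lemma weightS i : weight i.+1 * (b.+1)%:R = weight i.
Proof. by rewrite /weight exprS invfM mulrAC mulVf ?mul1r // pnatr_eq0. Qed.

Lemma weight_lt1 i : (0 < b)%N -> weight i < 1.
Proof. by move=> b_gt0; rewrite invf_lt1 ?exprn_gt0 // exprn_egt1 // ltr1n ltnS. Qed.

Lemma tail_sum_ge x k : (l <= k)%N -> tail_sum x k = 0.
Proof. by move=> lk; rewrite /tail_sum big_pred0 // => i; have := ltn_ord i; lia. Qed.

Lemma tail_sumS x k : (k < l)%N ->
  tail_sum x k = weight k.+1 * x ord0 (inord k.+1) + tail_sum x k.+1.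
Proof.
move=> kl; rewrite /tail_sum (bigD1 (inord k.+1)) /= ?inordK ?ltnS //.
congr (_ + _); apply: eq_bigl => i; rewrite -val_eqE /= inordK ?ltnS //.
by rewrite [RHS]ltn_neqAle andbC eq_sym.
Qed.

Lemma tail_sum_ge0 x k : (forall i, 0 <= x ord0 i) -> 0 <= tail_sum x k.
Proof.
by move=> x_ge0; apply: sumr_ge0 => i _; exact: mulr_ge0 (ltW (weight_gt0 i)) (x_ge0 i).
Qed.

End TailSums.

Section IntegerPoints.
Variables (R : realType) (l b : nat) (x : 'rV[R]_l.+1).
Hypotheses (b_gt0 : (0 < b)%N) (x_int : forall i, x ord0 i \is a Num.int).
Hypothesis x_le : forall k : 'I_l.+1, (k < l)%N -> x ord0 k <= 1 + tail_sum b x k.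
Hypothesis x_last : x ord0 ord_max <= b%:R.

Lemma coord_le1_of (k : 'I_l.+1) :
  (k < l)%N -> tail_sum b x k < weight R b k -> x ord0 k <= 1.
Proof.
move=> kl tk; rewrite -(intr_ltD1 (x_int k) (int_num1 R)).
by have := x_le kl; have := weight_lt1 R k b_gt0; lra.
Qed.

Lemma tail_sum_lt_weight j : (j <= l)%N -> tail_sum b x j < weight R b j.
Proof.
move=> jl; rewrite -(subKn jl); elim: (l - j)%N (leq_subr j l) => [|m IH] ml.
  by rewrite subn0 tail_sum_ge // weight_gt0.
have ek : (l - m = (l - m.+1).+1)%N by lia.
move: IH; rewrite ek => /(_ (ltnW ml)) IH; set k := (l - m.+1)%N in ek IH *.
have kl : (k < l)%N by lia.
have w_gt0 := weight_gt0 R b k.+1.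
rewrite tail_sumS // -(weightS R b k).
have [k1l|k1l] := eqVneq k.+1 l.
  have -> : inord k.+1 = ord_max :> 'I_l.+1 by apply: val_inj; rewrite /= inordK ?k1l.
  rewrite tail_sum_ge ?k1l // addr0 ltr_pM2l ?weight_gt0 //.
  by apply: le_lt_trans x_last _; rewrite ltr_nat.
have x1 : x ord0 (inord k.+1) <= 1.
  by apply: coord_le1_of; rewrite inordK ?ltnS //; lia.
have b1 : (2 : R) <= (b.+1)%:R by rewrite ler_nat ltnS.
have := ler_wpM2l (ltW w_gt0) x1; have := ler_wpM2l (ltW w_gt0) b1; lra.
Qed.

Lemma coord_le1 (k : 'I_l.+1) : (k < l)%N -> x ord0 k <= 1.
Proof. by move=> kl; apply: coord_le1_of (tail_sum_lt_weight (ltnW kl)). Qed.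

Lemma coord_tail_sum_ge0_of (k : 'I_l.+1) c : weight R b k <= c ->
  0 <= c * x ord0 k + tail_sum b x k -> 0 <= x ord0 k /\ 0 <= tail_sum b x k.
Proof.
move=> wc cxt; have tk := tail_sum_lt_weight (ltn_ord k).
have xk_ge0 : 0 <= x ord0 k.
  apply: (intr_ge0_of_affine (x_int k) _ _ cxt); have := weight_gt0 R b k; lra.
split=> //; have [kl|lk] := ltnP k l; last by rewrite tail_sum_ge.
case: (intr01 (x_int k) xk_ge0 (coord_le1 kl)) => xk; move: cxt; rewrite xk.
  by rewrite mulr0 add0r.
by have := x_le kl; rewrite xk; lra.
Qed.

Hypothesis x_first : 0 <= x ord0 ord0 + tail_sum b x 0.

Lemma coord_tail_sum_ge0 k :
  (k <= l)%N -> 0 <= x ord0 (inord k) /\ 0 <= tail_sum b x k.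
Proof.
elim: k => [|k IH] kl.
  have -> : inord 0 = ord0 :> 'I_l.+1 by apply: val_inj; rewrite /= inordK.
  by apply: (@coord_tail_sum_ge0_of ord0 1); rewrite ?mul1r // ltW // weight_lt1.
have [_ tk] := IH (ltnW kl).
have := @coord_tail_sum_ge0_of (inord k.+1) (weight R b k.+1).
by rewrite inordK ?ltnS //; apply => //; rewrite -tail_sumS.
Qed.

Lemma coord_ge0 (i : 'I_l.+1) : 0 <= x ord0 i.
Proof. by have [+ _] := coord_tail_sum_ge0 (ltn_ord i); rewrite inord_val. Qed.

End IntegerPoints.

Lemma Pb_Zpts (R : realType) (l b : nat) :
  (0 < b)%N -> @Pb R l b `&` @Zpts R l.+1 = @Xb R l b.
Proof.
move=> b_gt0; apply/seteqP; split=> x /=.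
  move=> [[x_le [x_last x_first]] x_int].
  have x_ge0 := coord_ge0 b_gt0 x_int x_le x_last x_first.
  have x_le1 := coord_le1 b_gt0 x_int x_le x_last.
  split=> [i il|]; first exact: intr01 (x_int i) (x_ge0 i) (x_le1 i il).
  have /natrP[k xk] : x ord0 ord_max \is a Num.nat by rewrite -intrEge0.
  by exists k; split=> //; rewrite -(ler_nat R) -xk.
move=> [x01 [k [kb xk]]].
have x_nat i : x ord0 i \is a Num.nat.
  have [il|li] := ltnP i l; first by case: (x01 i il) => ->; rewrite ?nat_num0 ?nat_num1.
  have -> : i = ord_max by apply/val_inj/eqP; rewrite eqn_leq li -ltnS ltn_ord.
  by rewrite xk natr_nat.
have tail_ge0 j : 0 <= tail_sum b x j by apply: tail_sum_ge0 => i; exact: natr_ge0.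
split; last by move=> i; exact: intr_nat.
split=> [j jl|]; first by case: (x01 j jl) => ->; have := tail_ge0 j; rewrite /tail_sum; lra.
split; first by rewrite xk ler_nat.
exact: addr_ge0 (natr_ge0 (x_nat ord0)) (tail_ge0 0%N).
Qed.

Section PbInequalities.
Variables (R : realType) (l b : nat).

Definition tail_row (k : nat) : 'rV[R]_l.+1 := \row_i ((k < i)%N%:R * weight R b i).

Definition Pb_row (j : 'I_(l + 2)) : 'rV[R]_l.+1 :=
  if (j < l)%N then delta_mx 0 (inord j) - tail_row j
  else if j == l :> nat then delta_mx 0 ord_max
  else - (delta_mx 0 0 + tail_row 0).

Definition Pb_rhs (j : 'I_(l + 2)) : R :=
  if (j < l)%N then 1 else if j == l :> nat then b%:R else 0.

Lemma dotv_tail_row k x : dotv (tail_row k) x = tail_sum b x k.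
Proof.
rewrite /dotv /tail_sum [RHS]big_mkcond; apply: eq_bigr => i _.
by rewrite mxE; case: ifP; rewrite ?mul1r ?mul0r.
Qed.

Lemma Pb_row_leE j x : (dotv (Pb_row j) x <= Pb_rhs j) =
  if (j < l)%N then x ord0 (inord j) <= 1 + tail_sum b x j
  else if j == l :> nat then x ord0 ord_max <= b%:R
  else 0 <= x ord0 ord0 + tail_sum b x 0.
Proof.
rewrite /Pb_row /Pb_rhs; case: ifP => _.
  by rewrite dotvDl dotvNl dotv_delta dotv_tail_row lerBlDr.
by case: ifP => _; rewrite ?dotvNl ?dotvDl ?dotv_delta ?dotv_tail_row ?oppr_le0.
Qed.

Lemma Pb_rowsE : @Pb R l b = [set x | forall j, dotv (Pb_row j) x <= Pb_rhs j].
Proof.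
apply/seteqP; split=> x /=.
  move=> [x_le [x_last x_first]] j; rewrite Pb_row_leE.
  have [jl|lj] := ltnP j l; last by case: eqP.
  by have := x_le (inord j); rewrite inordK ?ltnS ?(ltnW jl) // => /(_ jl).
move=> Px; split=> [k kl|].
  by have := Px (Ordinal (ltn_addr 2 kl)); rewrite Pb_row_leE /= kl inord_val.
have l_lt : (l < l + 2)%N by rewrite addn2 ltnS leqnSn.
have lS_lt : (l.+1 < l + 2)%N by rewrite addn2.
have := Px (Ordinal l_lt); rewrite Pb_row_leE /= ltnn eqxx => ->.
by have := Px (Ordinal lS_lt); rewrite Pb_row_leE /= ltnNge leqnSn eqn_leq ltnn.
Qed.

Lemma Pb_row_neq0 j : Pb_row j != 0.
Proof.
suff [k] : exists k, Pb_row j 0 k != 0 by apply: contraNneq => ->; rewrite mxE.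
rewrite /Pb_row; case: ifP => [jl|_].
  exists (inord j); rewrite !mxE inordK ?ltnS ?(ltnW jl) //.
  by rewrite !eqxx ltnn mul0r subr0 oner_neq0.
case: ifP => _; first by exists ord_max; rewrite !mxE !eqxx oner_neq0.
by exists 0; rewrite !mxE !eqxx mul0r addr0 oppr_eq0 oner_neq0.
Qed.

End PbInequalities.

Lemma Xb_delta (R : realType) (l b : nat) (i : 'I_l.+1) :
  (0 < b)%N -> @Xb R l b (delta_mx 0 i).
Proof.
move=> b_gt0; split=> [t _|]; first by rewrite mxE; case: (_ && _); [right | left].
by exists (nat_of_bool (ord_max == i)); rewrite mxE eqxx; split=> //; case: (_ == _).
Qed.

Lemma Xb0 (R : realType) (l b : nat) : @Xb R l b 0.
Proof. by split=> [t _|]; [left | exists 0%N]; rewrite mxE. Qed.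

Lemma Pb_full_dim (R : realType) (l b : nat) : (0 < b)%N -> affdim_ge (@Pb R l b) l.+1.
Proof.
move=> b_gt0; have Xb_Pb x : @Xb R l b x -> @Pb R l b x by rewrite -(Pb_Zpts R l b_gt0) => -[].
by apply: affdim_ge_simplex => [|i]; apply: Xb_Pb; [exact: Xb0 | exact: Xb_delta].
Qed.

Theorem lemma5p1 (R : realType) (b l : nat) (hb : (0 < b)%N) :
  @Pb R l b `&` @Zpts R l.+1 = @Xb R l b /\ rc_le (@Xb R l b) (l + 2).
Proof.
have Pb_rows := Pb_rowsE R l b.
split; first exact: (Pb_Zpts R l hb).
exists (@Pb R l b); split.
  by rewrite Pb_rows; exists (l + 2)%N, (@Pb_row R l b), (@Pb_rhs R l b).
split; first exact: (Pb_Zpts R l hb).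
rewrite Pb_rows; apply: polyhedron_at_most_facets; first exact: Pb_row_neq0.
by rewrite -Pb_rows; exact: Pb_full_dim.
Qed.
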